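(* Let $(M^n,g)$ be a Riemannian manifold with Levi-Civita connection $\nabla$, and let $K_{bcd}{}^e$ be a $(1,3)$-tensor field satisfying $$\nabla_m K_{bce}{}^m = A\, \nabla_m R_{bce}{}^m + B\,(a_{be}\nabla_c \varphi- a_{ce}\nabla_b\varphi)$$ with nonzero constants $A,B$, a smooth function $\varphi$ and a symmetric Codazzi tensor $a_{bc}$. Suppose $M$ is $K$-recurrent: $\nabla_a K_{bcd}{}^e =\lambda_a K_{bcd}{}^e$ for a nonzero covector field $\lambda$, and suppose $\lambda$ is closed ($\nabla_a\lambda_b=\nabla_b\lambda_a$). Define $B_{abcd}{}^e = \nabla_a K_{bcd}{}^e +\nabla_b K_{cad}{}^e +\nabla_c K_{abd}{}^e$. Then $$R_{am}R_{bce}{}^m + R_{bm}R_{cae}{}^m + R_{cm}R_{abe}{}^m =\frac{1}{A}\nabla_m B_{abce}{}^m .$$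
   Context: Abstract index notation with Einstein summation. $R_{abc}{}^d = \partial_a \Gamma_{bc}^d - \partial_b\Gamma_{ac}^d - \Gamma_{ac}^k\Gamma_{bk}^d + \Gamma_{ak}^d \Gamma_{bc}^k$, $R_{ac}=R_{abc}{}^b$. A Codazzi tensor is a symmetric $(0,2)$ tensor with $\nabla_b a_{cd}=\nabla_c a_{bd}$. *)

From Stdlib Require Import Reals List ClassicalEpsilon.
Open Scope R_scope.

(* Points of R^n are represented as  nat -> R  (only coordinates < n are used;
   the domain U below forces the others to be 0). *)
Definition pt := nat -> R.

Definition upd (x : pt) (i : nat) (t : R) : pt :=
  fun j => if Nat.eqb j i then t else x j.

Fixpoint sum_to (n : nat) (f : nat -> R) : R :=
  match n with O => 0 | S m => sum_to m f + f m end.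

Definition kdelta (i j : nat) : R := if Nat.eqb i j then 1 else 0.

Definition open_n (n : nat) (U : pt -> Prop) : Prop :=
  (forall x, U x -> forall i, (n <= i)%nat -> x i = 0) /\
  (forall x, U x -> exists eps, 0 < eps /\
     forall y, (forall i, (n <= i)%nat -> y i = 0) ->
               (forall i, (i < n)%nat -> Rabs (y i - x i) < eps) -> U y).

Definition has_partial (f : pt -> R) (i : nat) (x : pt) (l : R) : Prop :=
  derivable_pt_lim (fun t => f (upd x i t)) (x i) l.

(* the partial derivative  \partial_i f  (meaningful where it exists) *)
Definition pd (i : nat) (f : pt -> R) : pt -> R :=
  fun x => epsilon (inhabits 0) (fun l => has_partial f i x l).

Fixpoint iter_pd (ds : list nat) (f : pt -> R) : pt -> R :=
  match ds with nil => f | i :: ds' => pd i (iter_pd ds' f) end.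

Definition continuous_on_n (n : nat) (U : pt -> Prop) (f : pt -> R) : Prop :=
  forall x, U x -> forall eps, 0 < eps -> exists delta, 0 < delta /\
    forall y, U y -> (forall i, (i < n)%nat -> Rabs (y i - x i) < delta) ->
      Rabs (f y - f x) < eps.

Definition smooth (n : nat) (U : pt -> Prop) (f : pt -> R) : Prop :=
  forall ds, Forall (fun i => (i < n)%nat) ds ->
    (forall i, (i < n)%nat -> forall x, U x -> exists l, has_partial (iter_pd ds f) i x l) /\
    continuous_on_n n U (iter_pd ds f).

Definition riemannian (n : nat) (U : pt -> Prop) (g ginv : nat -> nat -> pt -> R) : Prop :=
  (forall i j, (i < n)%nat -> (j < n)%nat -> smooth n U (g i j)) /\
  (forall i j, (i < n)%nat -> (j < n)%nat -> smooth n U (ginv i j)) /\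
  (forall i j x, (i < n)%nat -> (j < n)%nat -> U x -> g i j x = g j i x) /\
  (forall x v, U x -> (exists i, (i < n)%nat /\ v i <> 0) ->
     0 < sum_to n (fun i => sum_to n (fun j => g i j x * v i * v j))) /\
  (forall i j x, (i < n)%nat -> (j < n)%nat -> U x ->
     sum_to n (fun k => g i k x * ginv k j x) = kdelta i j).

Definition christoffel (n : nat) (g ginv : nat -> nat -> pt -> R)
  (i j k : nat) : pt -> R :=
  fun x => / 2 * sum_to n (fun l => ginv k l x *
             (pd i (g j l) x + pd j (g i l) x - pd l (g i j) x)).

Definition riemann (n : nat) (g ginv : nat -> nat -> pt -> R)
  (a b c d : nat) : pt -> R :=
  let G := christoffel n g ginv in
  fun x => pd a (G b c d) x - pd b (G a c d) x
           - sum_to n (fun k => G a c k x * G b k d x)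
           + sum_to n (fun k => G a k d x * G b c k x).

Definition ricci (n : nat) (g ginv : nat -> nat -> pt -> R) (a c : nat) : pt -> R :=
  fun x => sum_to n (fun b => riemann n g ginv a b c b x).

Definition cov01 (n : nat) (G : nat -> nat -> nat -> pt -> R)
  (w : nat -> pt -> R) (a b : nat) : pt -> R :=
  fun x => pd a (w b) x - sum_to n (fun k => G a b k x * w k x).

Definition cov02 (n : nat) (G : nat -> nat -> nat -> pt -> R)
  (T : nat -> nat -> pt -> R) (a b c : nat) : pt -> R :=
  fun x => pd a (T b c) x - sum_to n (fun k => G a b k x * T k c x)
           - sum_to n (fun k => G a c k x * T b k x).

Definition cov13 (n : nat) (G : nat -> nat -> nat -> pt -> R)
  (T : nat -> nat -> nat -> nat -> pt -> R) (a b c d e : nat) : pt -> R :=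
  fun x => pd a (T b c d e) x
           - sum_to n (fun k => G a b k x * T k c d e x)
           - sum_to n (fun k => G a c k x * T b k d e x)
           - sum_to n (fun k => G a d k x * T b c k e x)
           + sum_to n (fun k => G a k e x * T b c d k x).

Definition cov14 (n : nat) (G : nat -> nat -> nat -> pt -> R)
  (T : nat -> nat -> nat -> nat -> nat -> pt -> R) (f a b c d e : nat) : pt -> R :=
  fun x => pd f (T a b c d e) x
           - sum_to n (fun k => G f a k x * T k b c d e x)
           - sum_to n (fun k => G f b k x * T a k c d e x)
           - sum_to n (fun k => G f c k x * T a b k d e x)
           - sum_to n (fun k => G f d k x * T a b c k e x)
           + sum_to n (fun k => G f k e x * T a b c d k x).

Definition Bten (n : nat) (G : nat -> nat -> nat -> pt -> R)
  (K : nat -> nat -> nat -> nat -> pt -> R) (a b c d e : nat) : pt -> R :=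
  fun x => cov13 n G K a b c d e x + cov13 n G K b c a d e x + cov13 n G K c a b d e x.

(* Recurrence and closedness of lambda make the covariant derivatives in
   nabla_m nabla_a K_bce^m commute, so nabla_m B_abce^m is the cyclic sum of
   nabla_a (nabla_m K_bce^m).  Inserting the divergence condition, the Codazzi
   part a_be nabla_c phi - a_ce nabla_b phi has vanishing cyclic derivative, since
   a is Codazzi and the Hessian of phi is symmetric.  The curvature part is, by the
   contracted second Bianchi identity, A times the cyclic sum of
   nabla_a nabla_c R_be - nabla_a nabla_b R_ce; the Ricci identity for the
   (0,2)-tensor R_ce turns these commutators into the products R_am R_bce^m, the
   remaining terms R_abc^d R_de cancelling by the first Bianchi identity. *)

From Stdlib Require Import Reals List ClassicalEpsilon Lia Lra Setoid Morphisms.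
From Stdlib Require Import FunctionalExtensionality PropExtensionality.
From Coquelicot Require Import Coquelicot.
Open Scope R_scope.

(** * Partial derivatives and smoothness on an open set *)

Lemma upd_id (x : pt) i : upd x i (x i) = x.
Proof.
apply functional_extensionality; intro j; unfold upd.
destruct (Nat.eqb_spec j i); subst; auto.
Qed.

Lemma upd_upd (x : pt) i s t : upd (upd x i s) i t = upd x i t.
Proof.
apply functional_extensionality; intro j; unfold upd.
destruct (Nat.eqb_spec j i); auto.
Qed.

Lemma upd_eq (x : pt) i t : upd x i t i = t.
Proof. unfold upd; rewrite Nat.eqb_refl; auto. Qed.

Lemma upd_comm (x : pt) i j s t : i <> j -> upd (upd x i s) j t = upd (upd x j t) i s.
Proof.
intro Hij; apply functional_extensionality; intro k; unfold upd.
destruct (Nat.eqb_spec k j), (Nat.eqb_spec k i); subst; auto; congruence.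
Qed.

Lemma pd_of_has_partial f i x l : has_partial f i x l -> pd i f x = l.
Proof.
intro H; unfold pd.
assert (E : exists l, has_partial f i x l) by eauto.
eapply uniqueness_limite; [apply (epsilon_spec (inhabits 0) _ E) | exact H].
Qed.

Lemma has_partial_pd f i x : (exists l, has_partial f i x l) -> has_partial f i x (pd i f x).
Proof. intro E; exact (epsilon_spec (inhabits 0) _ E). Qed.

Lemma open_n_line n U x i : open_n n U -> U x -> (i < n)%nat ->
  exists eps, 0 < eps /\ forall t, Rabs (t - x i) < eps -> U (upd x i t).
Proof.
intros [Hout Hopen] Hx Hi; destruct (Hopen x Hx) as [eps [Heps H]].
exists eps; split; auto; intros t Ht; apply H.
- intros j Hj; unfold upd; destruct (Nat.eqb_spec j i); [lia | auto].
- intros j Hj; unfold upd; destruct (Nat.eqb_spec j i); subst; auto.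
  rewrite Rminus_diag, Rabs_R0; auto.
Qed.

Lemma has_partial_local n U f h i x l : open_n n U -> (forall y, U y -> f y = h y) -> U x ->
  (i < n)%nat -> has_partial f i x l -> has_partial h i x l.
Proof.
intros HU E Hx Hi Hf; destruct (open_n_line n U x i HU Hx Hi) as [e [He HE]].
intros eps Heps; destruct (Hf eps Heps) as [d Hd].
assert (Hm : 0 < Rmin d e) by (apply Rmin_pos; [apply cond_pos | auto]).
exists (mkposreal _ Hm); intros t Ht0 Ht; simpl in Ht.
rewrite <- (E (upd x i (x i + t))), <- (E (upd x i (x i))).
- apply Hd; auto; apply Rlt_le_trans with (1 := Ht); apply Rmin_l.
- apply HE; rewrite Rminus_diag, Rabs_R0; auto.
- apply HE; replace (x i + t - x i) with t by ring.
  apply Rlt_le_trans with (1 := Ht); apply Rmin_r.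
Qed.

Lemma pd_local n U f h i x : open_n n U -> (forall y, U y -> f y = h y) -> U x ->
  (i < n)%nat -> pd i f x = pd i h x.
Proof.
intros HU E Hx Hi; unfold pd.
replace (fun l => has_partial f i x l) with (fun l => has_partial h i x l); [reflexivity|].
apply functional_extensionality; intro l; apply propositional_extensionality; split;
  apply has_partial_local with n U; auto; intros; symmetry; auto.
Qed.

Lemma has_partial_plus f h i x l1 l2 : has_partial f i x l1 -> has_partial h i x l2 ->
  has_partial (fun y => f y + h y) i x (l1 + l2).
Proof. apply derivable_pt_lim_plus. Qed.

Lemma has_partial_mult f h i x l1 l2 : has_partial f i x l1 -> has_partial h i x l2 ->
  has_partial (fun y => f y * h y) i x (l1 * h x + f x * l2).
Proof.
intros Hf Hh; pose proof (derivable_pt_lim_mult _ _ _ _ _ Hf Hh) as K.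
unfold mult_fct in K; rewrite upd_id in K; exact K.
Qed.

Lemma continuous_on_n_plus n U f h : continuous_on_n n U f -> continuous_on_n n U h ->
  continuous_on_n n U (fun y => f y + h y).
Proof.
intros Hf Hh x Hx eps Heps.
destruct (Hf x Hx (eps/2)) as [d1 [Hd1 H1]]; [lra|].
destruct (Hh x Hx (eps/2)) as [d2 [Hd2 H2]]; [lra|].
exists (Rmin d1 d2); split; [apply Rmin_pos; auto|]; intros y Hy Hc.
assert (A1 : Rabs (f y - f x) < eps/2).
{ apply H1; auto; intros; apply Rlt_le_trans with (1 := Hc i H); apply Rmin_l. }
assert (A2 : Rabs (h y - h x) < eps/2).
{ apply H2; auto; intros; apply Rlt_le_trans with (1 := Hc i H); apply Rmin_r. }
replace (f y + h y - (f x + h x)) with ((f y - f x) + (h y - h x)) by ring.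
apply Rle_lt_trans with (1 := Rabs_triang _ _); lra.
Qed.

Lemma continuous_on_n_mult n U f h : continuous_on_n n U f -> continuous_on_n n U h ->
  continuous_on_n n U (fun y => f y * h y).
Proof.
intros Hf Hh x Hx eps Heps.
set (M := Rabs (f x) + Rabs (h x) + 1).
assert (HM : 0 < M) by (unfold M; pose proof (Rabs_pos (f x)); pose proof (Rabs_pos (h x)); lra).
set (e1 := Rmin 1 (eps / M)).
assert (He1 : 0 < e1) by (apply Rmin_pos; [lra | apply Rdiv_lt_0_compat; auto]).
destruct (Hf x Hx e1 He1) as [d1 [Hd1 H1]]; destruct (Hh x Hx e1 He1) as [d2 [Hd2 H2]].
exists (Rmin d1 d2); split; [apply Rmin_pos; auto|]; intros y Hy Hc.
assert (A1 : Rabs (f y - f x) < e1).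
{ apply H1; auto; intros; apply Rlt_le_trans with (1 := Hc i H); apply Rmin_l. }
assert (A2 : Rabs (h y - h x) < e1).
{ apply H2; auto; intros; apply Rlt_le_trans with (1 := Hc i H); apply Rmin_r. }
assert (e1_le_1 : e1 <= 1) by apply Rmin_l.
assert (e1M : e1 * M <= eps).
{ assert (e1 <= eps / M) by apply Rmin_r.
  apply Rmult_le_compat_r with (r := M) in H; [|lra].
  unfold Rdiv in H; rewrite Rmult_assoc, Rinv_l in H; lra. }
assert (Bf : Rabs (f y) <= Rabs (f x) + e1).
{ replace (f y) with (f x + (f y - f x)) by ring.
  apply Rle_trans with (1 := Rabs_triang _ _); lra. }
replace (f y * h y - f x * h x) with (f y * (h y - h x) + h x * (f y - f x)) by ring.
apply Rle_lt_trans with (1 := Rabs_triang _ _); rewrite !Rabs_mult.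
pose proof (Rabs_pos (h y - h x)); pose proof (Rabs_pos (f y - f x)).
pose proof (Rabs_pos (h x)); pose proof (Rabs_pos (f x)).
apply Rle_lt_trans with ((Rabs (f x) + e1) * Rabs (h y - h x) + Rabs (h x) * Rabs (f y - f x)).
- apply Rplus_le_compat_r, Rmult_le_compat_r; auto.
- unfold M in *; nra.
Qed.

(* Smoothness of a sum or product cannot be proved directly from the definition,
   since the derivatives of a product are again sums of products: we close the
   smooth functions under these operations and show the closure is smooth. *)
Inductive smooth_closure (n : nat) (U : pt -> Prop) : (pt -> R) -> Prop :=
| smooth_closure_base f : smooth n U f -> smooth_closure n U f
| smooth_closure_plus f h : smooth_closure n U f -> smooth_closure n U h ->
    smooth_closure n U (fun y => f y + h y)
| smooth_closure_mult f h : smooth_closure n U f -> smooth_closure n U h ->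
    smooth_closure n U (fun y => f y * h y)
| smooth_closure_local f h : smooth_closure n U f -> (forall y, U y -> f y = h y) ->
    smooth_closure n U h.

Section SmoothClosure.
Variables (n : nat) (U : pt -> Prop).
Hypothesis HU : open_n n U.

Lemma smooth_closure_has_pd f i x : smooth_closure n U f -> (i < n)%nat -> U x ->
  has_partial f i x (pd i f x).
Proof.
intros Hf Hi Hx; apply has_partial_pd; induction Hf.
- destruct (H nil (Forall_nil _)) as [H1 _]; apply H1; auto.
- destruct IHHf1 as [l1 ?], IHHf2 as [l2 ?]; eexists; apply has_partial_plus; eauto.
- destruct IHHf1 as [l1 ?], IHHf2 as [l2 ?]; eexists; apply has_partial_mult; eauto.
- destruct IHHf as [l ?]; exists l; eapply has_partial_local; eauto.
Qed.

Lemma smooth_closure_continuous f : smooth_closure n U f -> continuous_on_n n U f.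
Proof.
intro Hf; induction Hf.
- destruct (H nil (Forall_nil _)) as [_ H2]; exact H2.
- apply continuous_on_n_plus; auto.
- apply continuous_on_n_mult; auto.
- intros x Hx eps Heps; destruct (IHHf x Hx eps Heps) as [d [Hd Hd2]].
  exists d; split; auto; intros y Hy Hc; rewrite <- !H; auto.
Qed.

Lemma smooth_pd f i : (i < n)%nat -> smooth n U f -> smooth n U (pd i f).
Proof.
intros Hi Hf ds Hds.
replace (iter_pd ds (pd i f)) with (iter_pd (ds ++ i :: nil) f).
- apply Hf, Forall_app; auto.
- clear Hds; induction ds; simpl; congruence.
Qed.

Lemma smooth_closure_pd f i : smooth_closure n U f -> (i < n)%nat ->
  smooth_closure n U (pd i f).
Proof.
intros Hf Hi; induction Hf.
- apply smooth_closure_base, smooth_pd; auto.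
- eapply smooth_closure_local; [apply smooth_closure_plus; [exact IHHf1 | exact IHHf2]|].
  intros y Hy; symmetry; apply pd_of_has_partial.
  apply has_partial_plus; apply smooth_closure_has_pd; auto.
- eapply smooth_closure_local.
  + apply smooth_closure_plus;
      [apply smooth_closure_mult; [exact IHHf1 | exact Hf2]
      | apply smooth_closure_mult; [exact Hf1 | exact IHHf2]].
  + intros y Hy; symmetry; apply pd_of_has_partial.
    apply has_partial_mult; apply smooth_closure_has_pd; auto.
- eapply smooth_closure_local; [exact IHHf|].
  intros y Hy; apply pd_local with n U; auto.
Qed.

Lemma smooth_closure_smooth f : smooth_closure n U f -> smooth n U f.
Proof.
intros Hf ds Hds.
assert (P : smooth_closure n U (iter_pd ds f)).
{ induction Hds; simpl; auto; apply smooth_closure_pd; auto. }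
split.
- intros; eexists; apply smooth_closure_has_pd; eauto.
- apply smooth_closure_continuous; auto.
Qed.

Lemma pd_const c i x : pd i (fun _ => c) x = 0.
Proof. apply pd_of_has_partial, derivable_pt_lim_const. Qed.

Lemma smooth_const c : smooth n U (fun _ => c).
Proof.
intros ds Hds.
replace (iter_pd ds (fun _ => c)) with (fun _ : pt => match ds with nil => c | _ => 0 end).
- split.
  + intros i Hi x Hx; exists 0; apply derivable_pt_lim_const.
  + intros x Hx eps He; exists 1; split; [lra|].
    intros; rewrite Rminus_diag, Rabs_R0; auto.
- clear Hds; induction ds; simpl; auto.
  rewrite <- IHds; apply functional_extensionality; intro y; symmetry; apply pd_const.
Qed.

Lemma smooth_plus f h : smooth n U f -> smooth n U h -> smooth n U (fun y => f y + h y).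
Proof. intros; apply smooth_closure_smooth, smooth_closure_plus; apply smooth_closure_base; auto. Qed.

Lemma smooth_mult f h : smooth n U f -> smooth n U h -> smooth n U (fun y => f y * h y).
Proof. intros; apply smooth_closure_smooth, smooth_closure_mult; apply smooth_closure_base; auto. Qed.

Lemma smooth_local f h : smooth n U f -> (forall y, U y -> f y = h y) -> smooth n U h.
Proof. intros; apply smooth_closure_smooth; eapply smooth_closure_local; [apply smooth_closure_base|]; eauto. Qed.

Lemma smooth_opp f : smooth n U f -> smooth n U (fun y => - f y).
Proof.
intros; apply smooth_local with (fun y => -1 * f y); [|intros; ring].
apply smooth_mult; auto; apply smooth_const.
Qed.

Lemma smooth_minus f h : smooth n U f -> smooth n U h -> smooth n U (fun y => f y - h y).
Proof. intros; apply smooth_plus; auto; apply smooth_opp; auto. Qed.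

Lemma smooth_sum m F : (forall k, (k < m)%nat -> smooth n U (F k)) ->
  smooth n U (fun y => sum_to m (fun k => F k y)).
Proof. induction m; intros H; simpl; [apply smooth_const | apply smooth_plus; auto]. Qed.

Lemma pd_plus f h i x : smooth n U f -> smooth n U h -> (i < n)%nat -> U x ->
  pd i (fun y => f y + h y) x = pd i f x + pd i h x.
Proof.
intros; apply pd_of_has_partial, has_partial_plus;
  apply smooth_closure_has_pd; auto; apply smooth_closure_base; auto.
Qed.

Lemma pd_mult f h i x : smooth n U f -> smooth n U h -> (i < n)%nat -> U x ->
  pd i (fun y => f y * h y) x = pd i f x * h x + f x * pd i h x.
Proof.
intros; apply pd_of_has_partial, has_partial_mult;
  apply smooth_closure_has_pd; auto; apply smooth_closure_base; auto.
Qed.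

Lemma pd_opp f i x : smooth n U f -> (i < n)%nat -> U x ->
  pd i (fun y => - f y) x = - pd i f x.
Proof.
intros; rewrite (pd_local n U _ (fun y => -1 * f y)) by (auto; intros; ring).
rewrite pd_mult, pd_const by (auto; apply smooth_const); ring.
Qed.

Lemma pd_minus f h i x : smooth n U f -> smooth n U h -> (i < n)%nat -> U x ->
  pd i (fun y => f y - h y) x = pd i f x - pd i h x.
Proof. intros; unfold Rminus; rewrite pd_plus, pd_opp; auto; apply smooth_opp; auto. Qed.

Lemma pd_sum m F i x : (forall k, (k < m)%nat -> smooth n U (F k)) -> (i < n)%nat -> U x ->
  pd i (fun y => sum_to m (fun k => F k y)) x = sum_to m (fun k => pd i (F k) x).
Proof.
induction m; intros H Hi Hx; simpl; [apply pd_const|].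
rewrite pd_plus, IHm; auto; apply smooth_sum; auto.
Qed.

Lemma pd_sum_mult m F H i x :
  (forall k, (k < m)%nat -> smooth n U (F k)) -> (forall k, (k < m)%nat -> smooth n U (H k)) ->
  (i < n)%nat -> U x ->
  pd i (fun y => sum_to m (fun k => F k y * H k y)) x
  = sum_to m (fun k => pd i (F k) x * H k x + F k x * pd i (H k) x).
Proof.
intros; rewrite (pd_sum m (fun k y => F k y * H k y)); auto.
- induction m; simpl; auto; rewrite pd_mult, IHm; auto.
- intros; apply smooth_mult; auto.
Qed.

End SmoothClosure.

(** * Symmetry of second partial derivatives *)

Definition plane (x : pt) (i j : nat) (u v : R) : pt := upd (upd x i u) j v.

Lemma plane_comm x i j u v : i <> j -> plane x i j u v = plane x j i v u.
Proof. intro; unfold plane; rewrite upd_comm; auto. Qed.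

Lemma plane_center x i j : plane x i j (x i) (x j) = x.
Proof. unfold plane; rewrite !upd_id; auto. Qed.

Lemma plane_upd x i j u v t : upd (plane x i j u v) j t = plane x i j u t.
Proof. apply upd_upd. Qed.

Lemma plane_snd x i j u v : plane x i j u v j = v.
Proof. apply upd_eq. Qed.

Lemma plane_other x i j u v k : k <> i -> k <> j -> plane x i j u v k = x k.
Proof.
intros; unfold plane, upd.
destruct (Nat.eqb_spec k j), (Nat.eqb_spec k i); auto; lia.
Qed.

Lemma open_n_plane n U x : open_n n U -> U x -> exists eps, 0 < eps /\
  forall i j u v, (i < n)%nat -> (j < n)%nat -> i <> j ->
    Rabs (u - x i) < eps -> Rabs (v - x j) < eps -> U (plane x i j u v).
Proof.
intros [Hout Hopen] Hx; destruct (Hopen x Hx) as [eps [He H]].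
exists eps; split; auto; intros i j u v Hi Hj Hij Hu Hv; apply H.
- intros k Hk; rewrite plane_other by lia; auto.
- intros k Hk.
  destruct (Nat.eq_dec k j) as [->|]; [rewrite plane_snd; auto|].
  destruct (Nat.eq_dec k i) as [->|]; [rewrite plane_comm, plane_snd; auto|].
  rewrite plane_other, Rminus_diag, Rabs_R0; auto.
Qed.

Section Clairaut.
Variables (n : nat) (U : pt -> Prop) (x : pt) (eps : R).
Hypotheses (HU : open_n n U) (Hx : U x) (Heps : 0 < eps).
Hypothesis Hplane : forall i j u v, (i < n)%nat -> (j < n)%nat -> i <> j ->
  Rabs (u - x i) < eps -> Rabs (v - x j) < eps -> U (plane x i j u v).

Lemma plane_is_derive f i j u v : smooth n U f -> (i < n)%nat -> (j < n)%nat -> i <> j ->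
  Rabs (u - x i) < eps -> Rabs (v - x j) < eps ->
  is_derive (fun t => f (plane x i j u t)) v (pd j f (plane x i j u v)).
Proof.
intros Hf Hi Hj Hij Hu Hv.
pose proof (smooth_closure_has_pd n U HU f j (plane x i j u v)
  (smooth_closure_base _ _ _ Hf) Hj (Hplane i j u v Hi Hj Hij Hu Hv)) as D.
apply is_derive_Reals in D; rewrite plane_snd in D.
eapply is_derive_ext; [|exact D]; intro t; simpl; rewrite plane_upd; auto.
Qed.

Lemma plane_is_derive_mixed f i j u v : smooth n U f -> (i < n)%nat -> (j < n)%nat -> i <> j ->
  Rabs (u - x i) < eps / 2 -> Rabs (v - x j) < eps ->
  is_derive (fun z => Derive (fun t => f (plane x i j z t)) v) u
    (pd i (pd j f) (plane x i j u v)).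
Proof.
intros Hf Hi Hj Hij Hu Hv.
assert (he2 : 0 < eps / 2) by lra.
pose proof (plane_is_derive (pd j f) j i v u (smooth_pd n U f j Hj Hf) Hj Hi
  (not_eq_sym Hij) Hv ltac:(lra)) as D.
rewrite <- plane_comm in D by auto.
eapply is_derive_ext_loc; [|exact D].
exists (mkposreal _ he2); intros z Hz; change (Rabs (z - u) < eps / 2) in Hz.
rewrite <- plane_comm by auto; symmetry; apply is_derive_unique, plane_is_derive; auto.
replace (z - x i) with ((z - u) + (u - x i)) by ring.
apply Rle_lt_trans with (1 := Rabs_triang _ _); lra.
Qed.

Lemma plane_mixed_continuous f i j : smooth n U f -> (i < n)%nat -> (j < n)%nat -> i <> j ->
  continuity_2d_pt (fun u v => Derive (fun z => Derive (fun t => f (plane x i j z t)) v) u)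
    (x i) (x j).
Proof.
intros Hf Hi Hj Hij e.
assert (Hs : smooth n U (pd i (pd j f))) by (do 2 (apply smooth_pd; auto)).
destruct (smooth_closure_continuous n U _ (smooth_closure_base _ _ _ Hs) x Hx e
  (cond_pos e)) as [d [Hd Hc]].
assert (Hm : 0 < Rmin (eps / 2) d) by (apply Rmin_pos; lra).
assert (Hc0 : forall k, Rabs (x k - x k) < eps / 2) by (intro; rewrite Rminus_diag, Rabs_R0; lra).
exists (mkposreal _ Hm); intros u v Hu Hv; simpl in Hu, Hv.
pose proof (Rmin_l (eps / 2) d); pose proof (Rmin_r (eps / 2) d).
replace (Derive (fun z => Derive (fun t => f (plane x i j z t)) v) u)
  with (pd i (pd j f) (plane x i j u v))
  by (symmetry; apply is_derive_unique, plane_is_derive_mixed; auto; lra).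
replace (Derive (fun z => Derive (fun t => f (plane x i j z t)) (x j)) (x i))
  with (pd i (pd j f) (plane x i j (x i) (x j)))
  by (symmetry; apply is_derive_unique, plane_is_derive_mixed; auto; specialize (Hc0 j); lra).
rewrite plane_center; apply Hc; [apply Hplane; auto; lra|].
intros k Hk.
destruct (Nat.eq_dec k j) as [->|]; [rewrite plane_snd; lra|].
destruct (Nat.eq_dec k i) as [->|]; [rewrite plane_comm, plane_snd by auto; lra|].
rewrite plane_other, Rminus_diag, Rabs_R0 by auto; auto.
Qed.

End Clairaut.

Lemma continuity_2d_pt_swap f u v :
  continuity_2d_pt (fun s t => f t s) v u -> continuity_2d_pt f u v.
Proof. intros H e; destruct (H e) as [d Hd]; exists d; intros; apply Hd; auto. Qed.

Lemma clairaut n U f i j x : open_n n U -> smooth n U f -> (i < n)%nat -> (j < n)%nat ->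
  U x -> pd i (pd j f) x = pd j (pd i f) x.
Proof.
intros HU Hf Hi Hj Hx; destruct (Nat.eq_dec i j) as [->|Hij]; auto.
destruct (open_n_plane n U x HU Hx) as [eps [Heps Hplane]].
assert (Hc : forall k, Rabs (x k - x k) < eps / 2) by (intro; rewrite Rminus_diag, Rabs_R0; lra).
assert (Hc' : forall k, Rabs (x k - x k) < eps) by (intro; specialize (Hc k); lra).
pose proof (is_derive_unique _ _ _ (plane_is_derive_mixed n U x eps HU Heps Hplane f i j
  (x i) (x j) Hf Hi Hj Hij (Hc i) (Hc' j))) as Dij.
pose proof (is_derive_unique _ _ _ (plane_is_derive_mixed n U x eps HU Heps Hplane f j i
  (x j) (x i) Hf Hj Hi (not_eq_sym Hij) (Hc j) (Hc' i))) as Dji.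
rewrite plane_center in Dij, Dji; rewrite <- Dij, <- Dji.
set (F := fun u v => f (plane x i j u v)).
assert (Fswap : forall u v, f (plane x j i v u) = F u v)
  by (intros; unfold F; rewrite plane_comm by auto; reflexivity).
transitivity (Derive (fun z => Derive (fun t => F t z) (x i)) (x j)).
2: { apply Derive_ext; intro; apply Derive_ext; intro; symmetry; apply Fswap. }
apply (Schwarz F).
- exists (mkposreal _ (ltac:(lra) : 0 < eps / 2)); intros u v Hu Hv; simpl in Hu, Hv.
  repeat split; eexists.
  + apply is_derive_ext with (fun z => f (plane x j i v z)); [intro; apply Fswap|].
    apply plane_is_derive with n U eps; auto; lra.
  + apply plane_is_derive with n U eps; auto; lra.
  + apply plane_is_derive_mixed with n U eps; auto; lra.
  + apply is_derive_ext with (fun z => Derive (fun t => f (plane x j i z t)) u).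
    { intro; apply Derive_ext; intro; apply Fswap. }
    apply plane_is_derive_mixed with n U eps; auto; lra.
- apply plane_mixed_continuous with n U eps; auto.
- apply continuity_2d_pt_swap.
  apply continuity_2d_pt_ext with (fun v u => Derive (fun z => Derive (fun t => f (plane x j i z t)) u) v).
  { intros; apply Derive_ext; intro; apply Derive_ext; intro; apply Fswap. }
  apply plane_mixed_continuous with n U eps; auto.
Qed.

(** * Finite sums *)

Lemma sum_to_ext m f h : (forall k, (k < m)%nat -> f k = h k) -> sum_to m f = sum_to m h.
Proof. induction m; intros H; simpl; auto; rewrite IHm, H; auto. Qed.

#[export] Instance sum_to_proper : Proper (eq ==> pointwise_relation nat eq ==> eq) sum_to.
Proof. intros m m' <- f h H; apply sum_to_ext; intros; apply H. Qed.

Lemma sum_to_plus m f h : sum_to m (fun k => f k + h k) = sum_to m f + sum_to m h.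
Proof. induction m; simpl; [ring | rewrite IHm; ring]. Qed.

Lemma sum_to_minus m f h : sum_to m (fun k => f k - h k) = sum_to m f - sum_to m h.
Proof. induction m; simpl; [ring | rewrite IHm; ring]. Qed.

Lemma sum_to_opp m f : sum_to m (fun k => - f k) = - sum_to m f.
Proof. induction m; simpl; [ring | rewrite IHm; ring]. Qed.

Lemma sum_to_mult_l m c f : c * sum_to m f = sum_to m (fun k => c * f k).
Proof. induction m; simpl; [ring | rewrite <- IHm; ring]. Qed.

Lemma sum_to_mult_r m c f : sum_to m f * c = sum_to m (fun k => f k * c).
Proof. induction m; simpl; [ring | rewrite <- IHm; ring]. Qed.

Lemma sum_to_zero m : sum_to m (fun _ => 0) = 0.
Proof. induction m; simpl; [ring | rewrite IHm; ring]. Qed.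

Lemma sum_to_swap m p F :
  sum_to m (fun k => sum_to p (fun j => F k j)) = sum_to p (fun j => sum_to m (fun k => F k j)).
Proof.
induction m; simpl; [symmetry; apply sum_to_zero|].
rewrite IHm, <- sum_to_plus; reflexivity.
Qed.

Definition delta0 (k : nat) : R := if Nat.eqb k 0 then 1 else 0.

Lemma sum_delta0 m : (0 < m)%nat -> sum_to m delta0 = 1.
Proof.
intro H; induction m; [lia|]; simpl; destruct m.
- unfold delta0; simpl; ring.
- rewrite IHm by lia; unfold delta0; simpl; ring.
Qed.

Definition dsum (m : nat) (H : nat -> nat -> R) : R :=
  sum_to m (fun k => sum_to m (fun j => H k j)).

Lemma sum_sum_as_dsum m H :
  sum_to m (fun k => sum_to m (fun j => H k j)) = dsum m H.
Proof. reflexivity. Qed.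

Section DoubleSum.
Variable m : nat.
Hypothesis Hm : (0 < m)%nat.

Lemma sum_as_dsum f : sum_to m f = dsum m (fun k j => f k * delta0 j).
Proof. unfold dsum; apply sum_to_ext; intros; rewrite <- sum_to_mult_l, sum_delta0; auto; ring. Qed.

Lemma const_as_dsum c : c = dsum m (fun k j => c * delta0 k * delta0 j).
Proof.
unfold dsum; rewrite (sum_to_ext m _ (fun k => c * delta0 k)).
- rewrite <- sum_to_mult_l, sum_delta0; auto; ring.
- intros; rewrite <- sum_to_mult_l, sum_delta0; auto; ring.
Qed.

Lemma dsum_plus f h : dsum m f + dsum m h = dsum m (fun k j => f k j + h k j).
Proof. unfold dsum; rewrite <- sum_to_plus; apply sum_to_ext; intros; rewrite <- sum_to_plus; auto. Qed.

Lemma dsum_minus f h : dsum m f - dsum m h = dsum m (fun k j => f k j - h k j).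
Proof. unfold dsum; rewrite <- sum_to_minus; apply sum_to_ext; intros; rewrite <- sum_to_minus; auto. Qed.

Lemma dsum_opp f : - dsum m f = dsum m (fun k j => - f k j).
Proof. unfold dsum; rewrite <- sum_to_opp; apply sum_to_ext; intros; rewrite <- sum_to_opp; auto. Qed.

Lemma dsum_mult_l c f : c * dsum m f = dsum m (fun k j => c * f k j).
Proof. unfold dsum; rewrite sum_to_mult_l; apply sum_to_ext; intros; rewrite sum_to_mult_l; auto. Qed.

Lemma dsum_mult_r c f : dsum m f * c = dsum m (fun k j => f k j * c).
Proof. unfold dsum; rewrite sum_to_mult_r; apply sum_to_ext; intros; rewrite sum_to_mult_r; auto. Qed.

Lemma const_plus_dsum c f : c + dsum m f = dsum m (fun k j => c * delta0 k * delta0 j + f k j).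
Proof. rewrite (const_as_dsum c) at 1; apply dsum_plus. Qed.

Lemma dsum_plus_const c f : dsum m f + c = dsum m (fun k j => f k j + c * delta0 k * delta0 j).
Proof. rewrite (const_as_dsum c) at 1; apply dsum_plus. Qed.

Lemma const_minus_dsum c f : c - dsum m f = dsum m (fun k j => c * delta0 k * delta0 j - f k j).
Proof. rewrite (const_as_dsum c) at 1; apply dsum_minus. Qed.

Lemma dsum_minus_const c f : dsum m f - c = dsum m (fun k j => f k j - c * delta0 k * delta0 j).
Proof. rewrite (const_as_dsum c) at 1; apply dsum_minus. Qed.

End DoubleSum.

Lemma dsum_antisym_zero m H :
  (forall k j, (k < m)%nat -> (j < m)%nat -> H k j + H j k = 0) -> dsum m H = 0.
Proof.
intro Hs.
assert (E : dsum m H = dsum m (fun k j => H j k)) by apply sum_to_swap.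
assert (E2 : dsum m H + dsum m (fun k j => H j k) = 0).
{ rewrite dsum_plus; unfold dsum; rewrite <- (sum_to_zero m); apply sum_to_ext; intros k Hk.
  rewrite <- (sum_to_zero m); apply sum_to_ext; auto. }
lra.
Qed.

(* Every tensor identity below is proved by one normal form: after expanding
   with the Leibniz rules, all terms are merged into a single double sum over
   (k, j) -- single sums padded by [delta0 j], scalars by [delta0 k * delta0 j] --
   whose summand vanishes after antisymmetrization in (k, j), which [ring] checks. *)
Ltac no_dsum t := match t with context [dsum _ _] => fail 1 | _ => idtac end.

Ltac dsum_merge Hm :=
  repeat (first
   [ rewrite dsum_plus | rewrite dsum_minus | rewrite dsum_opp
   | match goal with |- context [?c * dsum ?m ?f] => no_dsum c; rewrite (dsum_mult_l m c f) end
   | match goal with |- context [dsum ?m ?f * ?c] => no_dsum c; rewrite (dsum_mult_r m c f) end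
   | match goal with |- context [?c + dsum ?m ?f] => no_dsum c; rewrite (const_plus_dsum m Hm c f) end
   | match goal with |- context [dsum ?m ?f + ?c] => no_dsum c; rewrite (dsum_plus_const m Hm c f) end
   | match goal with |- context [?c - dsum ?m ?f] => no_dsum c; rewrite (const_minus_dsum m Hm c f) end
   | match goal with |- context [dsum ?m ?f - ?c] => no_dsum c; rewrite (dsum_minus_const m Hm c f) end ]).

Ltac distribute := repeat (setoid_rewrite Rmult_plus_distr_l || setoid_rewrite Rmult_minus_distr_l
   || setoid_rewrite Rmult_plus_distr_r || setoid_rewrite Rmult_minus_distr_r
   || setoid_rewrite Ropp_mult_distr_l_reverse || setoid_rewrite Ropp_mult_distr_r_reverse
   || setoid_rewrite Ropp_plus_distr || setoid_rewrite Ropp_minus_distr || setoid_rewrite Ropp_involutive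
   || setoid_rewrite sum_to_mult_l || setoid_rewrite sum_to_mult_r || setoid_rewrite <- sum_to_opp
   || setoid_rewrite sum_to_plus || setoid_rewrite sum_to_minus).

Ltac sum_identity Hm :=
  apply Rminus_diag_uniq; distribute;
  repeat rewrite sum_sum_as_dsum;
  repeat rewrite (sum_as_dsum _ Hm); dsum_merge Hm;
  apply dsum_antisym_zero; intros;
  repeat match goal with |- context [pd ?i (fun y => ?h y) ?x] =>
    change (pd i (fun y => h y) x) with (pd i h x) end;
  ring.

(** * Identities for a symmetric connection *)

Definition curvature n (G : nat -> nat -> nat -> pt -> R) (a b c d : nat) : pt -> R :=
  fun x => pd a (G b c d) x - pd b (G a c d) x
           - sum_to n (fun k => G a c k x * G b k d x)
           + sum_to n (fun k => G a k d x * G b c k x).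

Definition ricci_curvature n (G : nat -> nat -> nat -> pt -> R) (a c : nat) : pt -> R :=
  fun x => sum_to n (fun b => curvature n G a b c b x).

Definition cov03 (n : nat) (G : nat -> nat -> nat -> pt -> R)
  (T : nat -> nat -> nat -> pt -> R) (a b c e : nat) : pt -> R :=
  fun x => pd a (T b c e) x - sum_to n (fun k => G a b k x * T k c e x)
           - sum_to n (fun k => G a c k x * T b k e x)
           - sum_to n (fun k => G a e k x * T b c k x).

Definition hessian n (G : nat -> nat -> nat -> pt -> R) (phi : pt -> R) (a c : nat) : pt -> R :=
  fun x => pd a (pd c phi) x - sum_to n (fun k => G a c k x * pd k phi x).

Ltac solve_smooth := repeat (first
  [ assumption | lia
  | progress intros
  | apply smooth_sum
  | apply smooth_plus
  | apply smooth_minus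
  | apply smooth_mult
  | apply smooth_opp
  | apply smooth_pd; [lia|]
  | progress unfold cov01, cov02, cov03, cov13, cov14, curvature, ricci_curvature
  | match goal with H : _ |- smooth _ _ _ => solve [apply H; lia] end
  | apply smooth_const ]).

Ltac expand_pd n U := repeat (first
  [ rewrite (pd_sum_mult n U) by solve_smooth
  | rewrite (pd_minus n U) by solve_smooth
  | rewrite (pd_plus n U) by solve_smooth
  | rewrite (pd_mult n U) by solve_smooth
  | rewrite (pd_opp n U) by solve_smooth
  | rewrite (pd_sum n U) by solve_smooth
  | rewrite pd_const ]).

Section Connection.
Variables (n : nat) (U : pt -> Prop) (G : nat -> nat -> nat -> pt -> R).
Hypothesis HU : open_n n U.
Hypothesis HG : forall i j k, (i < n)%nat -> (j < n)%nat -> (k < n)%nat -> smooth n U (G i j k).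

Lemma curvature_antisym a b c d y : curvature n G a b c d y = - curvature n G b a c d y.
Proof.
unfold curvature.
rewrite (sum_to_ext n (fun k => G b c k y * G a k d y) (fun k => G a k d y * G b c k y)) by (intros; ring).
rewrite (sum_to_ext n (fun k => G b k d y * G a c k y) (fun k => G a c k y * G b k d y)) by (intros; ring).
ring.
Qed.

Lemma cov13_trace T a b e x :
  (forall i j k l, (i < n)%nat -> (j < n)%nat -> (k < n)%nat -> (l < n)%nat -> smooth n U (T i j k l)) ->
  (a < n)%nat -> (b < n)%nat -> (e < n)%nat -> U x ->
  sum_to n (fun m => cov13 n G T a b m e m x)
  = cov02 n G (fun b e y => sum_to n (fun m => T b m e m y)) a b e x.
Proof.
intros HT Ha Hb He Hx; assert (Hn : (0 < n)%nat) by lia.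
unfold cov13, cov02; expand_pd n U; sum_identity Hn.
Qed.

Lemma cov13_antisym T f a b c d x :
  (forall i j k l, (i < n)%nat -> (j < n)%nat -> (k < n)%nat -> (l < n)%nat -> smooth n U (T i j k l)) ->
  (forall i j k l y, T i j k l y = - T j i k l y) ->
  (f < n)%nat -> (a < n)%nat -> (b < n)%nat -> (c < n)%nat -> (d < n)%nat -> U x ->
  cov13 n G T f a b c d x = - cov13 n G T f b a c d x.
Proof.
intros HT Hanti Hf Ha Hb Hc Hd Hx; assert (Hn : (0 < n)%nat) by lia.
unfold cov13.
replace (T a b c d) with (fun y => - T b a c d y) by (apply functional_extensionality; auto).
rewrite (pd_opp n U) by solve_smooth.
setoid_rewrite (Hanti _ b c d); setoid_rewrite (Hanti a _ c d);
setoid_rewrite (Hanti a b _ d); setoid_rewrite (Hanti a b c _).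
sum_identity Hn.
Qed.

Lemma cov03_trace_mult lam K a b c e x :
  (forall i j k l, (i < n)%nat -> (j < n)%nat -> (k < n)%nat -> (l < n)%nat -> smooth n U (K i j k l)) ->
  (forall i, (i < n)%nat -> smooth n U (lam i)) ->
  (a < n)%nat -> (b < n)%nat -> (c < n)%nat -> (e < n)%nat -> U x ->
  cov03 n G (fun b c e y => sum_to n (fun m => lam m y * K b c e m y)) a b c e x
  = sum_to n (fun m => cov01 n G lam a m x * K b c e m x + lam m x * cov13 n G K a b c e m x).
Proof.
intros HK Hl Ha Hb Hc He Hx; assert (Hn : (0 < n)%nat) by lia.
unfold cov03, cov01, cov13; expand_pd n U; sum_identity Hn.
Qed.

Lemma cov14_cyclic_mult lam K f a b c d e x :
  (forall i j k l, (i < n)%nat -> (j < n)%nat -> (k < n)%nat -> (l < n)%nat -> smooth n U (K i j k l)) ->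
  (forall i, (i < n)%nat -> smooth n U (lam i)) ->
  (f < n)%nat -> (a < n)%nat -> (b < n)%nat -> (c < n)%nat -> (d < n)%nat -> (e < n)%nat -> U x ->
  cov14 n G (fun a b c d e y => lam a y * K b c d e y + lam b y * K c a d e y + lam c y * K a b d e y)
    f a b c d e x
  = cov01 n G lam f a x * K b c d e x + lam a x * cov13 n G K f b c d e x
    + (cov01 n G lam f b x * K c a d e x + lam b x * cov13 n G K f c a d e x)
    + (cov01 n G lam f c x * K a b d e x + lam c x * cov13 n G K f a b d e x).
Proof.
intros HK Hl Hf Ha Hb Hc Hd He Hx; assert (Hn : (0 < n)%nat) by lia.
unfold cov14, cov01, cov13; expand_pd n U; sum_identity Hn.
Qed.

Lemma cov03_mult_grad aT phi a b c e x :
  (forall i j, (i < n)%nat -> (j < n)%nat -> smooth n U (aT i j)) -> smooth n U phi ->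
  (a < n)%nat -> (b < n)%nat -> (c < n)%nat -> (e < n)%nat -> U x ->
  cov03 n G (fun b c e y => aT b e y * pd c phi y - aT c e y * pd b phi y) a b c e x
  = cov02 n G aT a b e x * pd c phi x + aT b e x * hessian n G phi a c x
    - cov02 n G aT a c e x * pd b phi x - aT c e x * hessian n G phi a b x.
Proof.
intros Ha Hp Ha' Hb Hc He Hx; assert (Hn : (0 < n)%nat) by lia.
unfold cov03, cov02, hessian; expand_pd n U; sum_identity Hn.
Qed.

Lemma cov03_lincomb F H A B a b c e x :
  (forall i j k, (i < n)%nat -> (j < n)%nat -> (k < n)%nat -> smooth n U (F i j k)) ->
  (forall i j k, (i < n)%nat -> (j < n)%nat -> (k < n)%nat -> smooth n U (H i j k)) ->
  (a < n)%nat -> (b < n)%nat -> (c < n)%nat -> (e < n)%nat -> U x ->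
  cov03 n G (fun b c e y => A * F b c e y + B * H b c e y) a b c e x
  = A * cov03 n G F a b c e x + B * cov03 n G H a b c e x.
Proof.
intros HF HH Ha Hb Hc He Hx; assert (Hn : (0 < n)%nat) by lia.
unfold cov03; expand_pd n U; sum_identity Hn.
Qed.

Lemma cov03_antisymmetrize F a b c e x :
  (forall i j k, (i < n)%nat -> (j < n)%nat -> (k < n)%nat -> smooth n U (F i j k)) ->
  (a < n)%nat -> (b < n)%nat -> (c < n)%nat -> (e < n)%nat -> U x ->
  cov03 n G (fun b c e y => - F b c e y + F c b e y) a b c e x
  = - cov03 n G F a b c e x + cov03 n G F a c b e x.
Proof.
intros HF Ha Hb Hc He Hx; assert (Hn : (0 < n)%nat) by lia.
unfold cov03; expand_pd n U; sum_identity Hn.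
Qed.

Hypothesis Gsym : forall i j, G i j = G j i.

Lemma bianchi_first a b c d x : (0 < n)%nat ->
  curvature n G a b c d x + curvature n G b c a d x + curvature n G c a b d x = 0.
Proof.
intro Hn; unfold curvature; rewrite (Gsym b a), (Gsym c a), (Gsym c b); sum_identity Hn.
Qed.

Lemma ricci_identity T a b c e x :
  (forall i j, (i < n)%nat -> (j < n)%nat -> smooth n U (T i j)) ->
  (a < n)%nat -> (b < n)%nat -> (c < n)%nat -> (e < n)%nat -> U x ->
  cov03 n G (cov02 n G T) a b c e x - cov03 n G (cov02 n G T) b a c e x
  = - sum_to n (fun d => curvature n G a b c d x * T d e x)
    - sum_to n (fun d => curvature n G a b e d x * T c d x).
Proof.
intros HT Ha Hb Hc He Hx; assert (Hn : (0 < n)%nat) by lia.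
unfold cov03, cov02; expand_pd n U.
rewrite (clairaut n U (T c e) a b) by solve_smooth.
unfold curvature; rewrite (Gsym b a); sum_identity Hn.
Qed.

Lemma bianchi_second a b c e d x :
  (a < n)%nat -> (b < n)%nat -> (c < n)%nat -> (e < n)%nat -> (d < n)%nat -> U x ->
  cov13 n G (curvature n G) a b c e d x + cov13 n G (curvature n G) b c a e d x
  + cov13 n G (curvature n G) c a b e d x = 0.
Proof.
intros Ha Hb Hc He Hd Hx; assert (Hn : (0 < n)%nat) by lia.
unfold cov13, curvature; expand_pd n U.
rewrite (clairaut n U (G c e d) b a), (clairaut n U (G b e d) c a),
  (clairaut n U (G a e d) c b) by solve_smooth.
rewrite (Gsym b a), (Gsym c a), (Gsym c b); sum_identity Hn.
Qed.

Lemma contracted_bianchi b c e x :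
  (b < n)%nat -> (c < n)%nat -> (e < n)%nat -> U x ->
  sum_to n (fun m => cov13 n G (curvature n G) m b c e m x)
  = - cov02 n G (ricci_curvature n G) b c e x + cov02 n G (ricci_curvature n G) c b e x.
Proof.
intros Hb Hc He Hx.
assert (HR : forall i j k l, (i < n)%nat -> (j < n)%nat -> (k < n)%nat -> (l < n)%nat ->
  smooth n U (curvature n G i j k l)) by solve_smooth.
assert (Bm : sum_to n (fun m => cov13 n G (curvature n G) m b c e m x
  + cov13 n G (curvature n G) b c m e m x + cov13 n G (curvature n G) c m b e m x) = 0).
{ rewrite <- (sum_to_zero n); apply sum_to_ext; intros; apply bianchi_second; auto. }
rewrite !sum_to_plus in Bm.
rewrite (sum_to_ext n (fun m => cov13 n G (curvature n G) c m b e m x)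
  (fun m => - cov13 n G (curvature n G) c b m e m x)) in Bm
  by (intros; apply cov13_antisym; auto; apply curvature_antisym).
rewrite sum_to_opp, !cov13_trace in Bm by auto.
unfold ricci_curvature; lra.
Qed.

Lemma cyclic_ricci_identity T a b c e x :
  (forall i j, (i < n)%nat -> (j < n)%nat -> smooth n U (T i j)) ->
  (a < n)%nat -> (b < n)%nat -> (c < n)%nat -> (e < n)%nat -> U x ->
  let X := cov03 n G (cov02 n G T) in
  (X b a c e x - X a b c e x) + (X a c b e x - X c a b e x) + (X c b a e x - X b c a e x)
  = sum_to n (fun d => T a d x * curvature n G b c e d x)
    + sum_to n (fun d => T b d x * curvature n G c a e d x)
    + sum_to n (fun d => T c d x * curvature n G a b e d x).
Proof.
intros HT Ha Hb Hc He Hx X; assert (Hn : (0 < n)%nat) by lia.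
unfold X; rewrite !ricci_identity by auto.
assert (Hcyc : sum_to n (fun d => curvature n G b a c d x * T d e x)
  + sum_to n (fun d => curvature n G a c b d x * T d e x)
  + sum_to n (fun d => curvature n G c b a d x * T d e x) = 0).
{ rewrite <- !sum_to_plus, <- (sum_to_zero n); apply sum_to_ext; intros d Hd.
  rewrite (curvature_antisym b a), (curvature_antisym a c), (curvature_antisym c b).
  transitivity (- (curvature n G a b c d x + curvature n G b c a d x
    + curvature n G c a b d x) * T d e x); [ring | rewrite bianchi_first by auto; ring]. }
rewrite !(sum_to_ext n (fun d => curvature n G _ _ e d x * T _ d x)
  (fun d => - (T _ d x * curvature n G _ _ e d x))) by (intros; rewrite curvature_antisym; ring).
rewrite !sum_to_opp; lra.
Qed.

Lemma hessian_sym phi a c x : smooth n U phi -> (a < n)%nat -> (c < n)%nat -> U x ->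
  hessian n G phi a c x = hessian n G phi c a x.
Proof. intros; unfold hessian; rewrite (clairaut n U phi a c), (Gsym a c); auto. Qed.

End Connection.

(** * Dependence on the connection over U only *)

Definition agree_on n (U : pt -> Prop) (G1 G2 : nat -> nat -> nat -> pt -> R) : Prop :=
  forall i j k y, (i < n)%nat -> (j < n)%nat -> (k < n)%nat -> U y -> G1 i j k y = G2 i j k y.

Section Locality.
Variables (n : nat) (U : pt -> Prop) (G1 G2 : nat -> nat -> nat -> pt -> R).
Hypotheses (HU : open_n n U) (HG : agree_on n U G1 G2).

Ltac sum_local HT := apply sum_to_ext; intros;
  repeat (rewrite HG by (auto; lia)); repeat (rewrite HT by (auto; lia)); reflexivity.

Lemma cov01_local T1 T2 a b x :
  (forall i y, (i < n)%nat -> U y -> T1 i y = T2 i y) ->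
  (a < n)%nat -> (b < n)%nat -> U x -> cov01 n G1 T1 a b x = cov01 n G2 T2 a b x.
Proof.
intros HT Ha Hb Hx; unfold cov01; f_equal; [apply pd_local with n U; auto | sum_local HT].
Qed.

Lemma cov02_local T1 T2 a b c x :
  (forall i j y, (i < n)%nat -> (j < n)%nat -> U y -> T1 i j y = T2 i j y) ->
  (a < n)%nat -> (b < n)%nat -> (c < n)%nat -> U x ->
  cov02 n G1 T1 a b c x = cov02 n G2 T2 a b c x.
Proof.
intros HT Ha Hb Hc Hx; unfold cov02; f_equal; [f_equal|];
  [apply pd_local with n U; auto | sum_local HT ..].
Qed.

Lemma cov03_local T1 T2 a b c e x :
  (forall i j k y, (i < n)%nat -> (j < n)%nat -> (k < n)%nat -> U y -> T1 i j k y = T2 i j k y) ->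
  (a < n)%nat -> (b < n)%nat -> (c < n)%nat -> (e < n)%nat -> U x ->
  cov03 n G1 T1 a b c e x = cov03 n G2 T2 a b c e x.
Proof.
intros HT Ha Hb Hc He Hx; unfold cov03; f_equal; [f_equal; [f_equal|]|];
  [apply pd_local with n U; auto | sum_local HT ..].
Qed.

Lemma cov13_local T1 T2 a b c d e x :
  (forall i j k l y, (i < n)%nat -> (j < n)%nat -> (k < n)%nat -> (l < n)%nat -> U y ->
     T1 i j k l y = T2 i j k l y) ->
  (a < n)%nat -> (b < n)%nat -> (c < n)%nat -> (d < n)%nat -> (e < n)%nat -> U x ->
  cov13 n G1 T1 a b c d e x = cov13 n G2 T2 a b c d e x.
Proof.
intros HT Ha Hb Hc Hd He Hx; unfold cov13; f_equal; [f_equal; [f_equal; [f_equal|]|]|];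
  [apply pd_local with n U; auto | sum_local HT ..].
Qed.

Lemma cov14_local T1 T2 f a b c d e x :
  (forall i j k l p y, (i < n)%nat -> (j < n)%nat -> (k < n)%nat -> (l < n)%nat -> (p < n)%nat ->
     U y -> T1 i j k l p y = T2 i j k l p y) ->
  (f < n)%nat -> (a < n)%nat -> (b < n)%nat -> (c < n)%nat -> (d < n)%nat -> (e < n)%nat -> U x ->
  cov14 n G1 T1 f a b c d e x = cov14 n G2 T2 f a b c d e x.
Proof.
intros HT Hf Ha Hb Hc Hd He Hx; unfold cov14;
  f_equal; [f_equal; [f_equal; [f_equal; [f_equal|]|]|]|];
  [apply pd_local with n U; auto | sum_local HT ..].
Qed.

Lemma curvature_local a b c d x :
  (a < n)%nat -> (b < n)%nat -> (c < n)%nat -> (d < n)%nat -> U x ->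
  curvature n G1 a b c d x = curvature n G2 a b c d x.
Proof.
intros Ha Hb Hc Hd Hx; unfold curvature; f_equal; [f_equal; [f_equal|]|];
  first [solve [apply pd_local with n U; auto; intros; apply HG; auto] | sum_local HG].
Qed.

Lemma ricci_curvature_local a c x : (a < n)%nat -> (c < n)%nat -> U x ->
  ricci_curvature n G1 a c x = ricci_curvature n G2 a c x.
Proof. intros; unfold ricci_curvature; apply sum_to_ext; intros; apply curvature_local; auto. Qed.

End Locality.

Lemma agree_on_refl n U G : agree_on n U G G.
Proof. intros i j k y _ _ _ _; reflexivity. Qed.

(** * K-recurrent manifolds *)

Section RecurrentIdentity.
Variables (n : nat) (U : pt -> Prop) (G : nat -> nat -> nat -> pt -> R)
  (K : nat -> nat -> nat -> nat -> pt -> R) (A B : R) (phi : pt -> R)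
  (aT : nat -> nat -> pt -> R) (lam : nat -> pt -> R).
Hypothesis HU : open_n n U.
Hypothesis HG : forall i j k, (i < n)%nat -> (j < n)%nat -> (k < n)%nat -> smooth n U (G i j k).
Hypothesis Gsym : forall i j, G i j = G j i.
Hypothesis HKs : forall b c d e, (b < n)%nat -> (c < n)%nat -> (d < n)%nat -> (e < n)%nat ->
  smooth n U (K b c d e).
Hypothesis Hphis : smooth n U phi.
Hypothesis Has : forall b c, (b < n)%nat -> (c < n)%nat -> smooth n U (aT b c).
Hypothesis Hlams : forall a, (a < n)%nat -> smooth n U (lam a).
Hypothesis HA : A <> 0.
Hypothesis Hcod : forall b c d x, (b < n)%nat -> (c < n)%nat -> (d < n)%nat -> U x ->
  cov02 n G aT b c d x = cov02 n G aT c b d x.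
Hypothesis HK : forall b c e x, (b < n)%nat -> (c < n)%nat -> (e < n)%nat -> U x ->
  sum_to n (fun m => cov13 n G K m b c e m x)
  = A * sum_to n (fun m => cov13 n G (curvature n G) m b c e m x)
    + B * (aT b e x * pd c phi x - aT c e x * pd b phi x).
Hypothesis Hrec : forall a b c d e x, (a < n)%nat -> (b < n)%nat -> (c < n)%nat -> (d < n)%nat ->
  (e < n)%nat -> U x -> cov13 n G K a b c d e x = lam a x * K b c d e x.
Hypothesis Hclosed : forall a b x, (a < n)%nat -> (b < n)%nat -> U x ->
  cov01 n G lam a b x = cov01 n G lam b a x.

Let div_K b c e y := sum_to n (fun m => lam m y * K b c e m y).
Let div_curvature b c e y := sum_to n (fun m => cov13 n G (curvature n G) m b c e m y).
Let codazzi_term b c e y := aT b e y * pd c phi y - aT c e y * pd b phi y.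

Lemma div_Bten_cyclic a b c e x :
  (a < n)%nat -> (b < n)%nat -> (c < n)%nat -> (e < n)%nat -> U x ->
  sum_to n (fun m => cov14 n G (Bten n G K) m a b c e m x)
  = cov03 n G div_K a b c e x + cov03 n G div_K b c a e x + cov03 n G div_K c a b e x.
Proof.
intros Ha Hb Hc He Hx; unfold div_K.
rewrite !(cov03_trace_mult n U G), <- !sum_to_plus by auto; apply sum_to_ext; intros m Hm.
rewrite (cov14_local n U G G HU (agree_on_refl n U G) (Bten n G K) (fun a b c d e y =>
  lam a y * K b c d e y + lam b y * K c a d e y + lam c y * K a b d e y)) by
  (auto; intros; unfold Bten; rewrite !Hrec; auto).
rewrite (cov14_cyclic_mult n U G) by auto.
rewrite (Hclosed m a), (Hclosed m b), (Hclosed m c), (Hrec m b c e m), (Hrec m c a e m),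
  (Hrec m a b e m), (Hrec a b c e m), (Hrec b c a e m), (Hrec c a b e m) by auto.
ring.
Qed.

Lemma cov03_div_K p q r s x :
  (p < n)%nat -> (q < n)%nat -> (r < n)%nat -> (s < n)%nat -> U x ->
  cov03 n G div_K p q r s x
  = A * cov03 n G div_curvature p q r s x + B * cov03 n G codazzi_term p q r s x.
Proof.
intros; rewrite (cov03_local n U G G HU (agree_on_refl n U G) div_K
  (fun b c e y => A * div_curvature b c e y + B * codazzi_term b c e y)) by
  (auto; intros; unfold div_K, div_curvature, codazzi_term; cbv beta; rewrite <- HK by auto; apply sum_to_ext; intros; rewrite Hrec; auto).
apply (cov03_lincomb n U G); auto; unfold div_curvature, codazzi_term; solve_smooth.
Qed.

Lemma cov03_div_curvature p q r s x :
  (p < n)%nat -> (q < n)%nat -> (r < n)%nat -> (s < n)%nat -> U x ->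
  let X := cov03 n G (cov02 n G (ricci_curvature n G)) in
  cov03 n G div_curvature p q r s x = - X p q r s x + X p r q s x.
Proof.
intros; rewrite (cov03_local n U G G HU (agree_on_refl n U G) div_curvature (fun b c e y =>
  - cov02 n G (ricci_curvature n G) b c e y + cov02 n G (ricci_curvature n G) c b e y)) by
  (auto; intros; apply (contracted_bianchi n U G); auto).
apply (cov03_antisymmetrize n U G); auto; solve_smooth.
Qed.

Lemma cyclic_cov03_codazzi_term a b c e x :
  (a < n)%nat -> (b < n)%nat -> (c < n)%nat -> (e < n)%nat -> U x ->
  cov03 n G codazzi_term a b c e x + cov03 n G codazzi_term b c a e x
  + cov03 n G codazzi_term c a b e x = 0.
Proof.
intros; unfold codazzi_term; rewrite !(cov03_mult_grad n U G) by auto.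
rewrite (Hcod b a e), (Hcod c a e), (Hcod c b e), (hessian_sym n U G HU Gsym phi b a),
  (hessian_sym n U G HU Gsym phi c a), (hessian_sym n U G HU Gsym phi c b) by auto.
ring.
Qed.

Lemma recurrent_cyclic_identity_sym a b c e x :
  (a < n)%nat -> (b < n)%nat -> (c < n)%nat -> (e < n)%nat -> U x ->
  sum_to n (fun m => ricci_curvature n G a m x * curvature n G b c e m x)
  + sum_to n (fun m => ricci_curvature n G b m x * curvature n G c a e m x)
  + sum_to n (fun m => ricci_curvature n G c m x * curvature n G a b e m x)
  = / A * sum_to n (fun m => cov14 n G (Bten n G K) m a b c e m x).
Proof.
intros Ha Hb Hc He Hx.
rewrite div_Bten_cyclic, !cov03_div_K, !cov03_div_curvature by auto.
rewrite <- cyclic_ricci_identity with (U := U) by (auto; solve_smooth).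
pose proof (cyclic_cov03_codazzi_term a b c e x Ha Hb Hc He Hx) as Hcyc.
set (X := cov03 n G (cov02 n G (ricci_curvature n G))) in *.
set (S := cov03 n G codazzi_term) in *.
transitivity (/ A * (A * ((- X a b c e x + X a c b e x) + (- X b c a e x + X b a c e x)
  + (- X c a b e x + X c b a e x)) + B * (S a b c e x + S b c a e x + S c a b e x))).
- rewrite Hcyc; field; auto.
- ring.
Qed.

End RecurrentIdentity.

Definition symmetrize (G : nat -> nat -> nat -> pt -> R) : nat -> nat -> nat -> pt -> R :=
  fun i j k y => (G i j k y + G j i k y) / 2.

Lemma symmetrize_sym G i j : symmetrize G i j = symmetrize G j i.
Proof.
apply functional_extensionality; intro k; apply functional_extensionality; intro y.
unfold symmetrize; f_equal; ring.
Qed.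

Lemma symmetrize_smooth n U G i j k : open_n n U ->
  (forall i j k, (i < n)%nat -> (j < n)%nat -> (k < n)%nat -> smooth n U (G i j k)) ->
  (i < n)%nat -> (j < n)%nat -> (k < n)%nat -> smooth n U (symmetrize G i j k).
Proof. intros; unfold symmetrize, Rdiv; apply smooth_mult; solve_smooth. Qed.

Lemma symmetrize_agree_on n U G :
  (forall i j k y, (i < n)%nat -> (j < n)%nat -> U y -> G i j k y = G j i k y) ->
  agree_on n U G (symmetrize G).
Proof. intros Gsym i j k y Hi Hj Hk Hy; unfold symmetrize; rewrite (Gsym j i); auto; field. Qed.

Lemma Bten_local n U G1 G2 K : open_n n U -> agree_on n U G1 G2 ->
  forall a b c d e y, (a < n)%nat -> (b < n)%nat -> (c < n)%nat -> (d < n)%nat -> (e < n)%nat ->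
  U y -> Bten n G1 K a b c d e y = Bten n G2 K a b c d e y.
Proof. intros HU HG; intros; unfold Bten; rewrite !(cov13_local n U G1 G2 HU HG K K); auto. Qed.

(* The Christoffel symbols are symmetric only on U, while the identities above
   rewrite with symmetry as an equation of functions: pass to the symmetrization,
   which agrees with G on U. *)
Lemma recurrent_cyclic_identity n U G K A B phi aT lam
  (HU : open_n n U)
  (HG : forall i j k, (i < n)%nat -> (j < n)%nat -> (k < n)%nat -> smooth n U (G i j k))
  (Gsym : forall i j k y, (i < n)%nat -> (j < n)%nat -> U y -> G i j k y = G j i k y)
  (HKs : forall b c d e, (b < n)%nat -> (c < n)%nat -> (d < n)%nat -> (e < n)%nat ->
     smooth n U (K b c d e))
  (Hphis : smooth n U phi)
  (Has : forall b c, (b < n)%nat -> (c < n)%nat -> smooth n U (aT b c))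
  (Hlams : forall a, (a < n)%nat -> smooth n U (lam a))
  (HA : A <> 0)
  (Hcod : forall b c d x, (b < n)%nat -> (c < n)%nat -> (d < n)%nat -> U x ->
     cov02 n G aT b c d x = cov02 n G aT c b d x)
  (HK : forall b c e x, (b < n)%nat -> (c < n)%nat -> (e < n)%nat -> U x ->
     sum_to n (fun m => cov13 n G K m b c e m x)
     = A * sum_to n (fun m => cov13 n G (curvature n G) m b c e m x)
       + B * (aT b e x * pd c phi x - aT c e x * pd b phi x))
  (Hrec : forall a b c d e x, (a < n)%nat -> (b < n)%nat -> (c < n)%nat -> (d < n)%nat ->
     (e < n)%nat -> U x -> cov13 n G K a b c d e x = lam a x * K b c d e x)
  (Hclosed : forall a b x, (a < n)%nat -> (b < n)%nat -> U x ->
     cov01 n G lam a b x = cov01 n G lam b a x)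
  a b c e x : (a < n)%nat -> (b < n)%nat -> (c < n)%nat -> (e < n)%nat -> U x ->
  sum_to n (fun m => ricci_curvature n G a m x * curvature n G b c e m x)
  + sum_to n (fun m => ricci_curvature n G b m x * curvature n G c a e m x)
  + sum_to n (fun m => ricci_curvature n G c m x * curvature n G a b e m x)
  = / A * sum_to n (fun m => cov14 n G (Bten n G K) m a b c e m x).
Proof.
intros Ha Hb Hc He Hx.
set (Gs := symmetrize G).
assert (AG : agree_on n U G Gs) by (apply symmetrize_agree_on; auto).
rewrite !(sum_to_ext n (fun m => ricci_curvature n G _ m x * curvature n G _ _ e m x)
  (fun m => ricci_curvature n Gs _ m x * curvature n Gs _ _ e m x)) by
  (intros; rewrite (ricci_curvature_local n U G Gs), (curvature_local n U G Gs) by auto; reflexivity).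
rewrite (sum_to_ext n (fun m => cov14 n G (Bten n G K) m a b c e m x)
  (fun m => cov14 n Gs (Bten n Gs K) m a b c e m x)) by
  (intros; apply (cov14_local n U G Gs); auto; intros; apply (Bten_local n U); auto).
apply (recurrent_cyclic_identity_sym n U Gs K A B phi aT lam); auto.
- intros; apply symmetrize_smooth; auto.
- apply symmetrize_sym.
- intros; rewrite <- !(cov02_local n U G Gs HU AG aT aT); auto.
- intros b' c' e' y Hb' Hc' He' Hy.
  rewrite (sum_to_ext n (fun m => cov13 n Gs K m b' c' e' m y)
    (fun m => cov13 n G K m b' c' e' m y))
    by (intros; symmetry; apply (cov13_local n U G Gs HU AG K K); auto).
  rewrite (sum_to_ext n (fun m => cov13 n Gs (curvature n Gs) m b' c' e' m y)
    (fun m => cov13 n G (curvature n G) m b' c' e' m y))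
    by (intros; symmetry; apply (cov13_local n U G Gs HU AG); auto;
        intros; apply (curvature_local n U); auto).
  apply HK; auto.
- intros; rewrite <- (cov13_local n U G Gs HU AG K K); auto.
- intros; rewrite <- !(cov01_local n U G Gs HU AG lam lam); auto.
Qed.

Lemma christoffel_smooth n U g ginv i j k : open_n n U -> riemannian n U g ginv ->
  (i < n)%nat -> (j < n)%nat -> (k < n)%nat -> smooth n U (christoffel n g ginv i j k).
Proof.
intros HU [Hg [Hginv _]] Hi Hj Hk; unfold christoffel.
apply smooth_mult; solve_smooth.
Qed.

Lemma christoffel_sym n U g ginv i j k y : open_n n U -> riemannian n U g ginv ->
  (i < n)%nat -> (j < n)%nat -> U y ->
  christoffel n g ginv i j k y = christoffel n g ginv j i k y.
Proof.
intros HU [_ [_ [Hgsym _]]] Hi Hj Hy; unfold christoffel; f_equal.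
apply sum_to_ext; intros l Hl.
rewrite (pd_local n U (g i j) (g j i)) by (auto; intros; apply Hgsym; auto); ring.
Qed.

Theorem mainTheorem12
  (n : nat) (U : pt -> Prop) (g ginv : nat -> nat -> pt -> R)
  (K : nat -> nat -> nat -> nat -> pt -> R)
  (A B : R) (phi : pt -> R) (aT : nat -> nat -> pt -> R) (lam : nat -> pt -> R)
  (HU : open_n n U)
  (Hg : riemannian n U g ginv)
  (HKs : forall b c d e, (b < n)%nat -> (c < n)%nat -> (d < n)%nat -> (e < n)%nat ->
           smooth n U (K b c d e))
  (Hphis : smooth n U phi)
  (Has : forall b c, (b < n)%nat -> (c < n)%nat -> smooth n U (aT b c))
  (Hlams : forall a, (a < n)%nat -> smooth n U (lam a))
  (HA : A <> 0) (HB : B <> 0)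
  (Hasym : forall b c x, (b < n)%nat -> (c < n)%nat -> U x -> aT b c x = aT c b x)
  (Hcod : forall b c d x, (b < n)%nat -> (c < n)%nat -> (d < n)%nat -> U x ->
     cov02 n (christoffel n g ginv) aT b c d x = cov02 n (christoffel n g ginv) aT c b d x)
  (HK : forall b c e x, (b < n)%nat -> (c < n)%nat -> (e < n)%nat -> U x ->
     sum_to n (fun m => cov13 n (christoffel n g ginv) K m b c e m x)
     = A * sum_to n (fun m => cov13 n (christoffel n g ginv) (riemann n g ginv) m b c e m x)
       + B * (aT b e x * pd c phi x - aT c e x * pd b phi x))
  (Hrec : forall a b c d e x, (a < n)%nat -> (b < n)%nat -> (c < n)%nat -> (d < n)%nat ->
     (e < n)%nat -> U x ->
     cov13 n (christoffel n g ginv) K a b c d e x = lam a x * K b c d e x)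
  (Hlam0 : exists a x, (a < n)%nat /\ U x /\ lam a x <> 0)
  (Hclosed : forall a b x, (a < n)%nat -> (b < n)%nat -> U x ->
     cov01 n (christoffel n g ginv) lam a b x = cov01 n (christoffel n g ginv) lam b a x) :
  forall a b c e x, (a < n)%nat -> (b < n)%nat -> (c < n)%nat -> (e < n)%nat -> U x ->
    sum_to n (fun m => ricci n g ginv a m x * riemann n g ginv b c e m x)
    + sum_to n (fun m => ricci n g ginv b m x * riemann n g ginv c a e m x)
    + sum_to n (fun m => ricci n g ginv c m x * riemann n g ginv a b e m x)
    = / A * sum_to n (fun m => cov14 n (christoffel n g ginv)
                                 (Bten n (christoffel n g ginv) K) m a b c e m x).
Proof.
apply (recurrent_cyclic_identity n U (christoffel n g ginv) K A B phi aT lam); auto.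
- intros; apply (christoffel_smooth n U); auto.
- intros; apply (christoffel_sym n U); auto.
Qed.
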